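(* Let $G=(V,E)$ be an unoriented connected graph (at most countable vertex set, locally finite, multiple edges allowed), let $s\in V$ be a vertex of finite degree $D$, and let $Z\subset V$ be a finite set with $s\notin Z$. Let $0<a\leq b$ and let the resistances $(r_e)_{e\in E}$ be independent, each distributed according to $\frac12\delta_a+\frac12\delta_b$. Then $$\operatorname{Var}\big(\mathcal{R}_r(s\leftrightarrow Z)\big)\geq C(b-a)^2,$$ where $C>0$ is a constant depending only on $D$.
   Context: A flow from $\{s\}$ to $Z$ of strength $1$ is an antisymmetric function $\theta$ on oriented edges ($\theta(\overrightarrow{xy})=-\theta(\overrightarrow{yx})$) satisfying the node law $\sum_{y\sim x}\theta(\overrightarrow{xy})=0$ at every $x\notin \{s\}\cup Z$, with net outflow $1$ at $s$ and net inflow $1$ into $Z$ (vertices of $Z$ treated as one vertex). The effective resistance is $\mathcal{R}_r(s\leftrightarrow Z)=\inf_\theta\sum_{e\in E}r_e\theta(e)^2$ over such flows. *)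

From HB Require Import structures.
From Stdlib Require Import Relations.
From mathcomp Require Import all_boot all_order all_algebra.
From mathcomp Require Import all_classical all_reals all_analysis.
Set Implicit Arguments. Unset Strict Implicit. Unset Printing Implicit Defensive.
Import Order.TTheory GRing.Theory Num.Theory.
Local Open Scope classical_set_scope.
Local Open Scope ring_scope.

(* A multigraph on vertex type V with edge type E: each (unoriented) edge e
   has two endpoints; [ends e] fixes an arbitrary reference orientation
   (ends e).1 -> (ends e).2.  An antisymmetric function on oriented edges is
   the same as a function theta : E -> R giving the flow along the reference
   orientation (the flow along the reverse orientation being -theta e). *)

Section Graph.
Variables (V E : choiceType) (ends : E -> V * V).

Definition incident (x : V) (e : E) : Prop := (ends e).1 = x \/ (ends e).2 = x.

Definition locally_finite : Prop := forall x, finite_set [set e | incident x e].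

Definition no_loops : Prop := forall e, (ends e).1 <> (ends e).2.

Definition adjacent (x y : V) : Prop :=
  exists e, ends e = (x, y) \/ ends e = (y, x).

Definition connected_graph : Prop :=
  forall x y, clos_refl_trans V adjacent x y.

Definition has_degree (x : V) (D : nat) : Prop := ([set e | incident x e] #= `I_D)%card.

Variable R : realType.

Definition netout (theta : E -> R) (x : V) : R :=
  (\sum_(e \in [set e | (ends e).1 = x]) theta e
   - \sum_(e \in [set e | (ends e).2 = x]) theta e)%R.

(* flow of strength 1 from {s} to Z (Z treated as one vertex) *)
Definition unit_flow (s : V) (Z : set V) (theta : E -> R) : Prop :=
  [/\ netout theta s = 1,
      (forall x, x <> s -> ~ Z x -> netout theta x = 0) &
      (\sum_(z \in Z) netout theta z = -1)%R].

Definition energy (r : E -> R) (theta : E -> R) : \bar R :=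
  (\esum_(e in [set: E]) ((r e * theta e ^+ 2)%:E))%E.

Definition eff_res (r : E -> R) (s : V) (Z : set V) : \bar R :=
  ereal_inf [set energy r theta | theta in [set theta | unit_flow s Z theta]].

End Graph.

Section Proba.
Context (R : realType) (d : measure_display) (T : measurableType d).
Variable P : probability T R.

Definition mutually_independent (I : choiceType) (X : I -> T -> R) : Prop :=
  forall (F : seq I) (B : I -> set R),
    uniq F -> (forall i, measurable (B i)) ->
    P (\bigcap_(i in [set` F]) (X i @^-1` B i)) =
    (\prod_(i <- F) P (X i @^-1` B i))%E.

Definition has_law_two_point (X : T -> R) (a b : R) : Prop :=
  forall B : set R, measurable B ->
    P (X @^-1` B) = ((2^-1)%:E * \d_a B + (2^-1)%:E * \d_b B)%E.

End Proba.

(* Let S be the D edges at s and, for c in {a, b}, let F_c be the effective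
   resistance when every edge of S has resistance c; F_c depends only on the
   edges off S, hence is independent of the event "all edges of S equal c",
   which has probability 2^-D and on which R(s <-> Z) = F_c.  A unit flow leaves
   s through S, so it carries at least 1/D on some edge of S; raising the
   resistances of S by b - a thus raises every energy, and therefore F, by at
   least (b - a)/D^2.  Hence for any m and k = (b - a)/(2 D^2), either F_a < m - k
   or F_b >= m + k, and R deviates from its mean by at least k with probability
   at least 2^-D.  For the independence, {F_c < x} must be an event of the
   edges off S: it is a countable union of events depending on finitely many
   edges, because F is the infimum of the resistances in which all edges outside
   a finite set are raised to b. *)

From Pilot Require Import Defs.
From HB Require Import structures.
From Stdlib Require Import Relations.
From mathcomp Require Import all_boot all_order all_algebra.
From mathcomp Require Import all_classical all_reals all_analysis.
From mathcomp Require Import finmap ring lra.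
Import Order.TTheory GRing.Theory Num.Theory.
Local Open Scope classical_set_scope.
Local Open Scope ring_scope.
Set Implicit Arguments. Unset Strict Implicit.

Lemma exists_ge_mean (R : realFieldType) (I : eqType) (l : seq I) (f : I -> R) (c : R) :
  0 < c -> c <= \sum_(i <- l) f i -> exists2 i, i \in l & c / (size l)%:R <= f i.
Proof.
move=> c_gt0 c_le; have [//|no_big] := pselect (exists2 i, i \in l & c / (size l)%:R <= f i).
have [i0 i0l] : exists i0, i0 \in l.
  case: l c_le {no_big} => [|i0 l _]; last by exists i0; rewrite mem_head.
  by rewrite big_nil => /(lt_le_trans c_gt0); rewrite ltxx.
have : \sum_(i <- l) f i < \sum_(i <- l) c / (size l)%:R.
  rewrite big_seq_cond [ltRHS]big_seq_cond; apply: ltr_sum => [|i /andP[il _]].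
    by apply/hasP; exists i0; rewrite ?i0l.
  by rewrite ltNge; apply/negP => hi; apply: no_big; exists i.
have size_neq0 : (size l)%:R != 0 :> R.
  by rewrite pnatr_eq0 size_eq0; apply: contraTneq i0l => ->.
rewrite big_const_seq count_predT iter_addr_0 -[X in _ < X -> _]mulr_natr divfK //.
by move=> /(le_lt_trans c_le); rewrite ltxx.
Qed.

Lemma sum_eq_indicator_uniq (R : pzSemiRingType) (I : eqType) (l : seq I) (j : I) :
  uniq l -> \sum_(i <- l) (i == j)%:R = (j \in l)%:R :> R.
Proof.
move=> ul; rewrite (eq_bigr (fun i => if i == j then 1 else 0)) => [|i _]; last first.
  by case: eqP.
by rewrite -big_mkcond big_const_seq iter_addr_0 -(count_uniq_mem j ul).
Qed.

Section Flows.
Variables (V E : choiceType) (ends : E -> V * V) (R : realType).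
Hypothesis lf : locally_finite ends.

Definition out_edges (x : V) : seq E := fset_set [set e | (ends e).1 = x].
Definition in_edges (x : V) : seq E := fset_set [set e | (ends e).2 = x].

Lemma finite_out_edges x : finite_set [set e | (ends e).1 = x].
Proof. by apply: sub_finite_set (lf x) => e; left. Qed.

Lemma finite_in_edges x : finite_set [set e | (ends e).2 = x].
Proof. by apply: sub_finite_set (lf x) => e; right. Qed.

Lemma mem_out_edges x e : (e \in out_edges x) = ((ends e).1 == x).
Proof. by rewrite in_fset_set; [apply/idP/eqP; rewrite in_setE | exact: finite_out_edges]. Qed.

Lemma mem_in_edges x e : (e \in in_edges x) = ((ends e).2 == x).
Proof. by rewrite in_fset_set; [apply/idP/eqP; rewrite in_setE | exact: finite_in_edges]. Qed.

Lemma netoutE (th : E -> R) x :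
  netout ends th x = \sum_(e <- out_edges x) th e - \sum_(e <- in_edges x) th e.
Proof.
by rewrite /netout !fsbig_finite //; [exact: finite_in_edges | exact: finite_out_edges].
Qed.

Lemma netout0 x : netout ends (fun=> 0 : R) x = 0.
Proof. by rewrite netoutE !big1 ?subr0. Qed.

Lemma netoutD (th1 th2 : E -> R) x :
  netout ends (fun e => th1 e + th2 e) x = netout ends th1 x + netout ends th2 x.
Proof. by rewrite !netoutE !big_split /=; ring. Qed.

Lemma netoutN (th : E -> R) x : netout ends (fun e => - th e) x = - netout ends th x.
Proof. by rewrite !netoutE !sumrN opprD opprK. Qed.

Definition edge_flow (f : E) : E -> R := fun e => (e == f)%:R.

Lemma finite_edge_flow_support f : finite_set [set e | edge_flow f e != 0].
Proof.
apply: sub_finite_set (finite_set1 f) => e /= h; apply/eqP; apply: contraNT h => ef.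
by rewrite /edge_flow (negbTE ef).
Qed.

Lemma netout_edge_flow f x :
  netout ends (edge_flow f) x = ((ends f).1 == x)%:R - ((ends f).2 == x)%:R.
Proof.
by rewrite netoutE !sum_eq_indicator_uniq ?fset_uniq // mem_out_edges mem_in_edges.
Qed.

Lemma exists_dipole_flow y z : clos_refl_trans V (Defs.adjacent ends) y z ->
  exists th : E -> R, finite_set [set e | th e != 0] /\
    forall x, netout ends th x = (x == y)%:R - (x == z)%:R.
Proof.
elim=> {y z} [y z [e [he|he]] | y | y w z _ [th1 [fin1 h1]] _ [th2 [fin2 h2]]].
- exists (edge_flow e); split; first exact: finite_edge_flow_support.
  by move=> x; rewrite netout_edge_flow he ![_ == x]eq_sym.
- exists (fun f => - edge_flow e f); split.
    by apply: sub_finite_set (finite_edge_flow_support e) => f /=; rewrite oppr_eq0.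
  by move=> x; rewrite netoutN netout_edge_flow he ![_ == x]eq_sym opprB.
- exists (fun=> 0); split => [|x]; last by rewrite netout0 subrr.
  by apply: sub_finite_set (finite_set0 E) => e /=; rewrite eqxx.
- exists (fun e => th1 e + th2 e); split => [|x]; last by rewrite netoutD h1 h2 addrA subrK.
  have finU : finite_set ([set e | th1 e != 0] `|` [set e | th2 e != 0]).
    by rewrite finite_setU.
  apply: sub_finite_set finU => e /= h.
  apply/orP; rewrite -negb_and; move: h; apply: contra => /andP[/eqP -> /eqP ->].
  by rewrite addr0.
Qed.

Lemma exists_unit_flow (s : V) (Z : set V) : connected_graph ends ->
  finite_set Z -> Z !=set0 -> ~ Z s ->
  exists th : E -> R, finite_set [set e | th e != 0] /\ unit_flow ends s Z th.
Proof.
move=> conn finZ [z Zz] Zs; have [th [fin_th h_th]] := exists_dipole_flow (conn s z).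
have sz : s != z by apply: contraPneq Zs => ->.
exists th; split => //; split.
- by rewrite h_th eqxx (negbTE sz) subr0.
- move=> x xs Zx; rewrite h_th; have /negbTE -> : x != s by apply/eqP.
  have /negbTE -> : x != z by apply: contraPneq Zx => ->.
  by rewrite subrr.
- rewrite fsbig_finite //=; under eq_bigr do rewrite h_th.
  rewrite sumrB !sum_eq_indicator_uniq ?fset_uniq // !in_fset_set //.
  by rewrite (memNset Zs) (mem_set Zz) sub0r.
Qed.

End Flows.

Lemma esumZl_le (R : realType) (T : choiceType) (A : set T) (k : R) (f : T -> \bar R) :
  0 <= k -> (forall i, (0 <= f i)%E) ->
  (\esum_(i in A) (k%:E * f i) <= k%:E * \esum_(i in A) f i)%E.
Proof.
move=> k_ge0 f_ge0; apply: ge_ereal_sup => _ [X XA <-].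
rewrite -ge0_mule_fsumr // lee_wpmul2l ?lee_fin //.
by apply: ereal_sup_ubound; exists X.
Qed.

Lemma esum_tail_lt (R : realType) (T : choiceType) (f : T -> R) (eta : R) :
  (forall x, 0 <= f x) -> (\esum_(x in [set: T]) (f x)%:E < +oo)%E -> 0 < eta ->
  exists2 K, finite_set K & (\esum_(x in ~` K) (f x)%:E < eta%:E)%E.
Proof.
move=> f_ge0 f_lty eta_gt0; have [X eX] : exists X, \esum_(x in [set: T]) (f x)%:E = X%:E.
  have : (0 <= \esum_(x in [set: T]) (f x)%:E)%E by apply: esum_ge0 => x _; rewrite lee_fin.
  by case: (\esum_(x in _) _) f_lty => [X _ _|//|//]; exists X.
have : ((X - eta)%:E < \esum_(x in [set: T]) (f x)%:E)%E by rewrite eX lte_fin ltrBlDr ltrDl.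
move=> /ereal_sup_gt[_ [K [finK _] <-]]; rewrite fsumEFin // lte_fin => SK_gt; exists K => //.
move: eX; rewrite (esumID K) => [|x _]; last by rewrite lee_fin.
rewrite !setTI esum_fset ?fsumEFin // => [|x _]; last by rewrite lee_fin.
case: (\esum_(x in _) _) => [t /eqP|//|//]; rewrite -EFinD eqe => /eqP X_eq.
by rewrite lte_fin; lra.
Qed.

Section EffectiveResistance.
Variables (V E : choiceType) (ends : E -> V * V) (R : realType) (s : V) (Z : set V).
Implicit Types (rho th : E -> R).
Local Notation eff_res rho := (eff_res ends rho s Z).

Lemma energy_ge0 rho th : (forall e, 0 <= rho e) -> (0 <= energy rho th)%E.
Proof. by move=> rho_ge0; apply: esum_ge0 => e _; rewrite lee_fin mulr_ge0 ?sqr_ge0. Qed.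

Lemma le_energy rho rho' th : (forall e, rho e <= rho' e) ->
  (energy rho th <= energy rho' th)%E.
Proof. by move=> le_rho; apply: le_esum => e _; rewrite lee_fin ler_wpM2r ?sqr_ge0. Qed.

Lemma energy_lt_pinfty rho th : (forall e, 0 <= rho e) ->
  finite_set [set e | th e != 0] -> (energy rho th < +oo)%E.
Proof.
move=> rho_ge0 fin_th; rewrite /energy (esumID [set e | th e != 0]) => [|e _]; last first.
  by rewrite lee_fin mulr_ge0 ?sqr_ge0.
rewrite setTI esum_fset // => [|e _]; last by rewrite lee_fin mulr_ge0 ?sqr_ge0.
rewrite esum1 => [|e [_ /negP/negPn/eqP ->]]; last by rewrite expr0n mulr0.
by rewrite adde0 fsumEFin // ltry.
Qed.

Lemma eff_res_le_energy rho th : unit_flow ends s Z th -> (eff_res rho <= energy rho th)%E.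
Proof. by move=> th_unit; apply: ereal_inf_lbound; exists th. Qed.

Lemma eff_res_ge0 rho : (forall e, 0 <= rho e) -> (0 <= eff_res rho)%E.
Proof. by move=> rho_ge0; apply: le_ereal_inf_tmp => _ [th _ <-]; exact: energy_ge0. Qed.

Lemma le_eff_res rho rho' : (forall e, rho e <= rho' e) -> (eff_res rho <= eff_res rho')%E.
Proof.
move=> le_rho; apply: le_ereal_inf_tmp => _ [th th_unit <-].
exact: le_trans (eff_res_le_energy rho th_unit) (le_energy th le_rho).
Qed.

Lemma eff_res_fin_num rho : locally_finite ends -> connected_graph ends ->
  finite_set Z -> Z !=set0 -> ~ Z s -> (forall e, 0 <= rho e) -> eff_res rho \is a fin_num.
Proof.
move=> lf conn finZ Z0 Zs rho_ge0.
have [th [fin_th th_unit]] := exists_unit_flow R lf conn finZ Z0 Zs.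
rewrite ge0_fin_numE; last exact: eff_res_ge0.
exact: le_lt_trans (eff_res_le_energy _ th_unit) (energy_lt_pinfty rho_ge0 fin_th).
Qed.

Lemma energy_incr rho rho' th e0 : (forall e, 0 <= rho e <= rho' e) ->
  (energy rho th + ((rho' e0 - rho e0) * th e0 ^+ 2)%:E <= energy rho' th)%E.
Proof.
move=> rho_bnd; have diff_ge0 e : 0 <= (rho' e - rho e) * th e ^+ 2.
  by rewrite mulr_ge0 ?sqr_ge0 // subr_ge0; case/andP: (rho_bnd e).
have -> : energy rho' th =
    (energy rho th + \esum_(e in [set: E]) ((rho' e - rho e) * th e ^+ 2)%:E)%E.
  rewrite /energy -esumD => [|e _|e _]; last 2 first.
  - by rewrite lee_fin mulr_ge0 ?sqr_ge0 //; case/andP: (rho_bnd e).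
  - by rewrite lee_fin.
  by apply: eq_esum => e _; rewrite -EFinD; congr (_%:E); ring.
rewrite leeD2l // esum_ge //; exists [set e0]; first by split; [exact: finite_set1|].
by rewrite fsbig_set1.
Qed.

Lemma eff_res_incr rho rho' k : (forall e, 0 <= rho e <= rho' e) ->
  (forall th, unit_flow ends s Z th -> exists e0, k <= (rho' e0 - rho e0) * th e0 ^+ 2) ->
  (eff_res rho + k%:E <= eff_res rho')%E.
Proof.
move=> rho_bnd flow_gain; apply: le_ereal_inf_tmp => _ [th th_unit <-].
have [e0 k_le] := flow_gain th th_unit.
apply: le_trans (energy_incr th e0 rho_bnd).
by apply: leeD; [exact: eff_res_le_energy | rewrite lee_fin].
Qed.

Definition trunc (b : R) (l : seq E) rho : E -> R := fun e => if e \in l then rho e else b.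

Lemma energy_trunc_le a b rho th (K : set E) : 0 < a -> a <= b -> (forall e, a <= rho e) ->
  finite_set K -> (energy (trunc b (fset_set K) rho) th <=
    energy rho th + (b / a)%:E * \esum_(e in ~` K) (rho e * th e ^+ 2)%:E)%E.
Proof.
move=> a_gt0 ab a_rho finK; have rho_ge0 e : 0 <= rho e := le_trans (ltW a_gt0) (a_rho e).
have trunc_ge0 e : (0 <= (trunc b (fset_set K) rho e * th e ^+ 2)%:E)%E.
  by rewrite lee_fin mulr_ge0 ?sqr_ge0 // /trunc; case: ifP => _; rewrite ?(le_trans (ltW a_gt0)).
have g_ge0 e : (0 <= (rho e * th e ^+ 2)%:E)%E by rewrite lee_fin mulr_ge0 ?sqr_ge0.
rewrite /energy (esumID K) // [X in (_ <= X + _)%E](esumID K) // !setTI -addeA leeD //.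
  by apply: le_esum => e Ke; rewrite /trunc in_fset_set ?mem_set.
apply: le_trans (leeDr _ _) => //; last exact: esum_ge0.
apply: le_trans (esumZl_le _ (divr_ge0 (ltW (lt_le_trans a_gt0 ab)) (ltW a_gt0)) _) => //.
apply: le_esum => e /= nKe; rewrite /trunc in_fset_set // memNset // -EFinM lee_fin.
rewrite [leRHS]mulrA ler_wpM2r ?sqr_ge0 // -[leLHS](divfK (lt0r_neq0 a_gt0)).
by apply: ler_wpM2l; [rewrite divr_ge0 ?ltW ?(lt_le_trans a_gt0 ab) | exact: a_rho].
Qed.

Lemma eff_res_trunc_lt a b rho c : 0 < a -> a <= b -> (forall e, a <= rho e <= b) ->
  (eff_res rho < c%:E)%E -> exists l : seq E, (eff_res (trunc b l rho) < c%:E)%E.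
Proof.
move=> a_gt0 ab rho_bnd /ereal_inf_lt[_ [th th_unit <-]] th_lt.
have a_rho e : a <= rho e by case/andP: (rho_bnd e).
have rho_ge0 e : 0 <= rho e := le_trans (ltW a_gt0) (a_rho e).
have [X eX] : exists X, energy rho th = X%:E.
  have := energy_ge0 th rho_ge0.
  by case: (energy rho th) th_lt => [X _ _|//|//]; exists X.
rewrite eX lte_fin in th_lt; have b_gt0 := lt_le_trans a_gt0 ab.
have [K finK tail_lt] : exists2 K : set E, finite_set K &
    (\esum_(e in ~` K) (rho e * th e ^+ 2)%:E < ((c - X) * (a / b))%:E)%E.
  apply: esum_tail_lt => [e||]; first by rewrite mulr_ge0 ?sqr_ge0.
    by rewrite -/(energy rho th) eX ltry.
  by rewrite mulr_gt0 ?divr_gt0 ?subr_gt0.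
exists (fset_set K); apply: le_lt_trans (eff_res_le_energy _ th_unit) _.
apply: le_lt_trans (energy_trunc_le th a_gt0 ab a_rho finK) _; rewrite eX.
have -> : c = X + b / a * ((c - X) * (a / b)) by field; rewrite !lt0r_neq0.
by rewrite EFinD lteD2lE // [X in (_ < X)%E]EFinM lte_pmul2l ?lte_fin ?divr_gt0.
Qed.

End EffectiveResistance.

Section Star.
Variables (V E : choiceType) (ends : E -> V * V) (R : realType).
Hypothesis lf : locally_finite ends.

Definition star (x : V) : seq E := fset_set [set e | incident ends x e].

Lemma mem_star x e : (e \in star x) = ((ends e).1 == x) || ((ends e).2 == x).
Proof.
rewrite in_fset_set //; apply/idP/orP => [/set_mem[] /eqP | [] /eqP x_e]; try by [left | right].
  by apply: mem_set; left.
by apply: mem_set; right.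
Qed.

Lemma size_star x D : has_degree ends x D -> size (star x) = D.
Proof. exact: card_fset_set. Qed.

Lemma unit_flow_star_mass s Z (th : E -> R) : no_loops ends -> unit_flow ends s Z th ->
  1 <= \sum_(e <- star s) `|th e|.
Proof.
move=> nl [th_s _ _]; rewrite (netoutE lf) in th_s.
have star_split : perm_eq (out_edges ends s ++ in_edges ends s) (star s).
  apply: uniq_perm; rewrite ?fset_uniq //.
    rewrite cat_uniq !fset_uniq andbT /=; apply/hasPn => e.
    rewrite (mem_in_edges lf) (mem_out_edges lf) => /eqP e2; apply/eqP => e1.
    by apply: (nl e); rewrite e1 e2.
  by move=> e; rewrite mem_cat (mem_out_edges lf) (mem_in_edges lf) mem_star.
rewrite -(perm_big _ star_split) big_cat /= -th_s.
apply: lerD; [|rewrite -sumrN]; apply: ler_sum => e _; first exact: ler_norm.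
by rewrite -normrN ler_norm.
Qed.

Lemma eff_res_star_incr s Z (rho rho' : E -> R) c : no_loops ends ->
  (forall e, 0 <= rho e <= rho' e) -> (forall e, e \in star s -> rho e + c <= rho' e) ->
  0 <= c ->
  (eff_res ends rho s Z + (c / (size (star s))%:R ^+ 2)%:E <= eff_res ends rho' s Z)%E.
Proof.
move=> nl rho_bnd rho_star c_ge0; apply: eff_res_incr => // th th_unit.
have [e0 e0_star th_e0] := exists_ge_mean ltr01 (unit_flow_star_mass nl th_unit).
have D_ge0 : 0 <= 1 / (size (star s))%:R :> R by rewrite divr_ge0.
have gain : c * (1 / (size (star s))%:R) ^+ 2 <= (rho' e0 - rho e0) * th e0 ^+ 2.
  rewrite -(real_normK (num_real (th e0))); apply: ler_pM; rewrite ?exprn_ge0 //.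
    by rewrite lerBrDl rho_star.
  by rewrite !expr2; apply: ler_pM.
by exists e0; move: gain; rewrite expr_div_n expr1n mulrA mulr1.
Qed.

End Star.

Section ProbabilityFacts.
Context (R : realType) (d : measure_display) (T : measurableType d).

Lemma le_mul_measure_integral (mu : {measure set T -> \bar R}) (f : T -> R) (U : set T) (k : R) :
  measurable U -> 0 <= k -> (forall w, 0 <= f w) -> (forall w, U w -> k <= f w) ->
  (k%:E * mu U <= \int[mu]_w (f w)%:E)%E.
Proof.
move=> mU k_ge0 f_ge0 f_ge_k; rewrite ge0_integralTE => [|w]; last by rewrite lee_fin.
apply: ereal_sup_ubound; exists (scale_nnsfun (indic_nnsfun R mU) k_ge0).
  move=> w /=; rewrite lee_fin measurable_realfun.mindicE /indic.
  by case: (boolP (w \in U)) => [/set_mem /f_ge_k|_]; rewrite ?mulr1 ?mulr0.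
rewrite (_ : sintegral mu _ =
  sintegral mu (cst k \* HBNNSimple.NonNegSimpleFun.sort (indic_nnsfun R mU))%R) //.
by rewrite sintegralrM (_ : sintegral mu _ = sintegral mu \1_U) ?sintegral_indic.
Qed.

Lemma measure_bigcup_countable_eq0 (mu : {measure set T -> \bar R}) (I : countType)
    (F : I -> set T) :
  (forall i, measurable (F i)) -> (forall i, mu (F i) = 0) -> mu (\bigcup_i F i) = 0.
Proof.
move=> mF F0; apply/(negligibleP _ (countable_bigcupT_measurable (countableP _) mF)).
have -> : \bigcup_i F i = \bigcup_n oapp F set0 (choice.unpickle n).
  apply/seteqP; split => w [i _ Fiw].
    by exists (choice.pickle i) => //; rewrite choice.pickleK.
  by case: (choice.unpickle i) Fiw => [j Fjw|//]; exists j.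
apply: negligible_bigcup => n; case: (choice.unpickle n) => [i|] /=; last exact: negligible_set0.
by apply/negligibleP; [exact: mF | exact: F0].
Qed.

Variable P : probability T R.

Lemma probability_lty (A : set T) : measurable A -> (P A < +oo)%E.
Proof. by move=> mA; rewrite (le_lt_trans (probability_le1 P mA)) ?ltry. Qed.

Lemma probability_fin_num (A : set T) : measurable A -> P A \is a fin_num.
Proof. by move=> mA; rewrite ge0_fin_numE ?measure_ge0 ?probability_lty. Qed.

Lemma independent_sigma_generated (A : set T) (G : set_system T) :
  measurable A -> setI_closed G -> G `<=` measurable ->
  (forall C, G C -> P (A `&` C) = (P A * P C)%E) ->
  forall C, <<s G >> C -> P (A `&` C) = (P A * P C)%E.
Proof.
move=> mA GI G_meas G_indep C GC.
pose H := [set C | measurable C /\ P (A `&` C) = (P A * P C)%E].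
suff /(_ _ GC)[] : <<s G >> `<=` H by [].
apply: lambda_system_subset => //; last by move=> B GB; split; [exact: G_meas|exact: G_indep].
split => //.
- by split; [exact: measurableT | rewrite setIT probability_setT mule1].
- move=> X Y YX [mX hX] [mY hY]; split; first exact: measurableD.
  have mAX := measurableI _ _ mA mX.
  rewrite setIDA (measureD mAX mY (probability_lty mAX)) -setIA (setIidr YX).
  rewrite (measureD mX mY (probability_lty mX)) (setIidr YX).
  (* [hX] and [hY] see [P] as a probability, [measureD] as a measure: rewrite them backwards. *)
  transitivity (P A * P X - P A * P Y)%E; first by rewrite -hX -hY.
  by rewrite muleBr ?probability_fin_num // fin_num_adde_defr ?probability_fin_num.
- move=> F ndF hF; have mF n : measurable (F n) by case: (hF n).
  split; first exact: bigcup_measurable.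
  have mAF n : measurable (A `&` F n) by exact: measurableI.
  have ndAF : {homo (fun n => A `&` F n) : n m / (n <= m)%N >-> (n <= m)%O}.
    by move=> n m nm; apply/subsetPset; apply: setIS; exact/subsetPset/(ndF _ _ nm).
  have lim_AF := nondecreasing_cvg_mu (mu:=P) mAF (bigcup_measurable (fun k _ => mAF k)) ndAF.
  have lim_F := cvgeMl (probability_fin_num mA)
    (nondecreasing_cvg_mu (mu:=P) mF (bigcup_measurable (fun k _ => mF k)) ndF).
  have AF_eq : (fun n => P A * (P \o F) n)%E = P \o (fun n => A `&` F n).
    by apply/funext => n /=; case: (hF n) => _ ->.
  rewrite AF_eq in lim_F.
  by rewrite setI_bigcupr; exact: (cvg_unique _ lim_AF lim_F).
Qed.

End ProbabilityFacts.

Section Cylinders.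
Context (R : realType) (d : measure_display) (T : measurableType d).
Variables (P : probability T R) (E : countType) (r : E -> T -> R).
Hypothesis r_meas : forall e, measurable_fun setT (r e).
Hypothesis r_indep : mutually_independent P r.

Definition cylinder (l : seq E) (B : E -> set R) : set T :=
  \bigcap_(e in [set` l]) r e @^-1` B e.

Lemma measurable_cylinder l B : (forall e, measurable (B e)) -> measurable (cylinder l B).
Proof.
move=> mB; rewrite /cylinder bigcap_seq.
apply: big_ind => [|X Y|e _]; [exact: measurableT | exact: measurableI |].
by rewrite -[X in measurable X]setTI; exact: r_meas.
Qed.

Definition outer_cylinders (S : seq E) : set_system T :=
  [set C | exists l B, [/\ uniq l, {in l, forall e, e \notin S},
     (forall e, measurable (B e)) & C = cylinder l B]].

Lemma outer_cylinders_setI_closed S : setI_closed (outer_cylinders S).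
Proof.
move=> _ _ [l1 [B1 [ul1 l1S mB1 ->]]] [l2 [B2 [ul2 l2S mB2 ->]]].
pose B e := (if e \in l1 then B1 e else setT) `&` (if e \in l2 then B2 e else setT).
exists (undup (l1 ++ l2)), B; split.
- exact: undup_uniq.
- by move=> e; rewrite mem_undup mem_cat => /orP[/l1S|/l2S].
- by move=> e; apply: measurableI; case: ifP => _ //; exact: measurableT.
apply/seteqP; split => w.
  move=> [w1 w2] e _; rewrite /B.
  by split; case: ifP => // el; [exact: w1 | exact: w2].
move=> wB; split => e el /=.
  by have := wB e; rewrite /= mem_undup mem_cat el /B el => /(_ isT)[].
by have := wB e; rewrite /= mem_undup mem_cat el orbT /B el => /(_ isT)[].
Qed.

Lemma sigma_outer_cylinders_measurable S :
  <<s outer_cylinders S >> `<=` measurable.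
Proof.
apply: smallest_sub; first exact: sigma_algebra_measurable.
by move=> _ [l [B [_ _ mB ->]]]; exact: measurable_cylinder.
Qed.

Lemma independent_outer_cylinders S (B : E -> set R) : uniq S ->
  (forall e, measurable (B e)) ->
  forall C, <<s outer_cylinders S >> C ->
    P (cylinder S B `&` C) = (P (cylinder S B) * P C)%E.
Proof.
move=> uS mB; apply: independent_sigma_generated.
- exact: measurable_cylinder.
- exact: outer_cylinders_setI_closed.
- by move=> C /(@sub_sigma_algebra _ setT) /sigma_outer_cylinders_measurable.
move=> _ [l [B' [ul lS mB' ->]]].
pose B'' e := if e \in S then B e else B' e.
have uSl : uniq (S ++ l).
  by rewrite cat_uniq uS ul andbT /=; apply/hasPn => e /lS.
have -> : cylinder S B `&` cylinder l B' = cylinder (S ++ l) B''.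
  apply/seteqP; split => w.
    move=> [wS wl] e; rewrite /= mem_cat /B'' => /orP[eS|el]; first by rewrite eS; exact: wS.
    by rewrite (negbTE (lS _ el)); exact: wl.
  move=> wSl; split => e /= e_in; have := wSl e; rewrite /= mem_cat e_in ?orbT /B''.
    by rewrite e_in => /(_ isT).
  by rewrite (negbTE (lS _ e_in)) => /(_ isT).
have mB'' e : measurable (B'' e) by rewrite /B''; case: ifP.
rewrite /cylinder !r_indep // big_cat /=; congr (_ * _)%E.
  by apply: eq_big_seq => e eS; rewrite /B'' eS.
by apply: eq_big_seq => e el; rewrite /B'' (negbTE (lS _ el)).
Qed.

End Cylinders.

Section VarianceLowerBound.
Variables (V E : countType) (ends : E -> V * V) (R : realType).
Context (d : measure_display) (T : measurableType d).
Variables (P : probability T R) (r : E -> T -> R) (s : V) (Z : set V) (a b : R).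
Hypotheses (nl : no_loops ends) (lf : locally_finite ends) (conn : connected_graph ends).
Hypotheses (finZ : finite_set Z) (Z0 : Z !=set0) (Zs : ~ Z s).
Hypotheses (a_gt0 : 0 < a) (ab : a < b).
Hypothesis r_meas : forall e, measurable_fun setT (r e).
Hypothesis r_law : forall e, has_law_two_point P (r e) a b.
Hypothesis r_indep : mutually_independent P r.

Local Notation S := (star ends s).
Local Notation F rho := (eff_res ends rho s Z).
Local Notation outer := (outer_cylinders r S).
Local Notation frozen_event c0 := (cylinder r S (fun=> [set c0])).

Definition two_valued : set T := [set w | forall e, e \notin S -> r e w = a \/ r e w = b].

Definition frozen (c0 : R) (w : T) : E -> R := fun e => if e \in S then c0 else r e w.

Definition frozen_below (c0 c : R) : set T := two_valued `&` [set w | (F (frozen c0 w) < c%:E)%E].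

Lemma frozen_bounds c0 w : c0 = a \/ c0 = b -> two_valued w -> forall e, a <= frozen c0 w e <= b.
Proof.
have two_point x : x = a \/ x = b -> a <= x <= b by case=> ->; rewrite lexx ltW.
move=> c0ab gw e; rewrite /frozen; case: ifPn => eS; first exact: two_point.
exact/two_point/gw.
Qed.

Lemma outer_preimage e B : e \notin S -> measurable B -> outer.-sigma.-measurable (r e @^-1` B).
Proof.
move=> eS mB; apply: sub_sigma_algebra; exists [:: e], (fun=> B); split => //.
  by move=> f; rewrite mem_seq1 => /eqP ->.
by rewrite /cylinder bigcap_seq big_seq1.
Qed.

Lemma measurable_two_point : measurable [set a; b].
Proof. by apply: measurableU; exact: measurable_set1. Qed.

Lemma outer_two_valued : outer.-sigma.-measurable two_valued.
Proof.
have -> : two_valued = \bigcap_e (if e \in S then setT else r e @^-1` [set a; b]).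
  apply/seteqP; split => [w gw e _ | w gw e eS]; last by have := gw e I; rewrite (negbTE eS).
  by case: ifPn => eS //; exact: gw.
rewrite -[X in measurable X]setCK setC_bigcap; apply: measurableC.
apply: countable_bigcupT_measurable (countableP _) _ => e; apply: measurableC.
by case: ifPn => eS; [exact: measurableT | exact: outer_preimage measurable_two_point].
Qed.

Lemma outer_two_valued_local (l : seq E) (Phi : (E -> R) -> Prop) :
  {in l, forall e, e \notin S} ->
  (forall rho rho', {in l, rho =1 rho'} -> Phi rho -> Phi rho') ->
  outer.-sigma.-measurable (two_valued `&` [set w | Phi (fun e => r e w)]).
Proof.
move=> lS Phi_local; pose pick (v : seq E) e := if e \in v then b else a.
have -> : two_valued `&` [set w | Phi (fun e => r e w)] = two_valued `&` \bigcup_(v : seq E)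
    (if `[< Phi (pick v) >] then cylinder r (undup l) (fun e => [set pick v e]) else set0).
  apply/seteqP; split => w [gw Phiw]; split => //.
    pose v := [seq e <- l | r e w == b].
    have pick_v : {in l, (fun e => r e w) =1 pick v}.
      move=> e el; rewrite /pick mem_filter el andbT.
      by case: eqP => // /eqP; case: (gw e (lS e el)) => ->; rewrite ?eqxx.
    exists v => //; rewrite asboolT; last exact: Phi_local pick_v Phiw.
    by move=> e; rewrite /= mem_undup => /pick_v.
  case: Phiw => v _; case: asboolP => // Phiv w_cyl; apply: Phi_local Phiv => e el.
  by have := w_cyl e; rewrite /= mem_undup el => /(_ isT).
apply: measurableI; first exact: outer_two_valued.
apply: countable_bigcupT_measurable (countableP _) _ => v.
case: asboolP => _; last exact: measurable0.
apply: sub_sigma_algebra; exists (undup l), (fun e => [set pick v e]).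
split=> //; first exact: undup_uniq.
by move=> e; rewrite mem_undup; exact: lS.
Qed.

Lemma outer_frozen_below c0 c : c0 = a \/ c0 = b ->
  outer.-sigma.-measurable (frozen_below c0 c).
Proof.
move=> c0ab; pose Phi l rho := (F (trunc b l (fun e => if e \in S then c0 else rho e)) < c%:E)%E.
have -> : frozen_below c0 c = \bigcup_(l : seq E) (two_valued `&` [set w | Phi l (fun e => r e w)]).
  apply/seteqP; split => w.
    move=> [gw w_lt]; have [l l_lt] := eff_res_trunc_lt a_gt0 (ltW ab) (frozen_bounds c0ab gw) w_lt.
    by exists l.
  move=> [l _ [gw w_lt]]; split => //; apply: le_lt_trans w_lt.
  apply: le_eff_res => e; rewrite /trunc; case: ifP => // _.
  by case/andP: (frozen_bounds c0ab gw e).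
apply: countable_bigcupT_measurable (countableP _) _ => l.
apply: (@outer_two_valued_local [seq e <- l | e \notin S] (Phi l)) => [e|rho rho' rho_eq].
  by rewrite mem_filter => /andP[].
rewrite /Phi; suff -> : trunc b l (fun e => if e \in S then c0 else rho e) =
          trunc b l (fun e => if e \in S then c0 else rho' e) by [].
apply/funext => e; rewrite /trunc; case: ifPn => // el; case: ifPn => // eS.
by apply: rho_eq; rewrite mem_filter eS.
Qed.


Lemma probability_two_valued : P two_valued = 1%E.
Proof.
have mvalued := sigma_outer_cylinders_measurable r_meas outer_two_valued.
suff bad0 : P (~` two_valued) = 0%E.
  by rewrite -[two_valued]setCK probability_setC ?bad0 ?sube0 //; exact: measurableC.
have -> : ~` two_valued = \bigcup_e (if e \in S then set0 else r e @^-1` ~` [set a; b]).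
  apply/seteqP; split => [w ngw | w [e _]]; last by case: ifPn => // eS he gw; exact/he/gw.
  have [e eS he] : exists2 e, e \notin S & ~ (r e w = a \/ r e w = b).
    by apply: contra_notP ngw => h f fS; apply: contra_notP h => hf; exists f.
  by exists e => //; rewrite (negbTE eS).
apply: measure_bigcup_countable_eq0 => e; case: ifPn => eS.
- exact: measurable0.
- apply: (sigma_outer_cylinders_measurable r_meas).
  exact: outer_preimage eS (measurableC measurable_two_point).
- exact: measure0.
apply: eq_trans (r_law e (measurableC measurable_two_point)) _.
by rewrite !diracE !memNset /= ?mule0 ?adde0 //; apply; [right | left].
Qed.

Lemma probability_frozen_event c0 : c0 = a \/ c0 = b ->
  P (frozen_event c0) = ((2^-1) ^+ size S)%:E.
Proof.
have ab_neq : a != b by rewrite lt_eqF.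
move=> c0ab; rewrite /cylinder (r_indep (fset_uniq _) (fun=> measurable_set1 c0)).
rewrite (eq_bigr (fun=> (2^-1)%:E)) => [|e _]; last first.
  apply: eq_trans (r_law e (measurable_set1 c0)) _; rewrite !diracE !in_set1.
  case: c0ab => ->; rewrite eqxx ?(negbTE ab_neq) 1?eq_sym ?(negbTE ab_neq) /=.
  - by rewrite mule1 mule0 adde0.
  - by rewrite mule1 mule0 add0e.
by rewrite prodEFin big_const_seq count_predT iter_mulr_1.
Qed.

Lemma frozen_eff_res_fin_num c0 w : c0 = a \/ c0 = b -> two_valued w ->
  F (frozen c0 w) \is a fin_num.
Proof.
move=> c0ab gw; apply: eff_res_fin_num => // e.
by case/andP: (frozen_bounds c0ab gw e) => /(le_trans (ltW a_gt0)).
Qed.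

Definition deviating (c0 m k : R) : set T :=
  frozen_below c0 (m - k) `|` (two_valued `\` frozen_below c0 (m + k)).

Lemma outer_deviating c0 m k : c0 = a \/ c0 = b ->
  outer.-sigma.-measurable (deviating c0 m k).
Proof.
move=> c0ab; apply: measurableU; first exact: outer_frozen_below.
by apply: measurableD; [exact: outer_two_valued | exact: outer_frozen_below].
Qed.

Lemma deviating_sqr_ge c0 m k w : c0 = a \/ c0 = b -> 0 <= k ->
  frozen_event c0 w -> deviating c0 m k w ->
  k ^+ 2 <= (fine (F (fun e => r e w)) - m) ^+ 2.
Proof.
move=> c0ab k_ge0 w_frozen w_dev.
have -> : (fun e => r e w) = frozen c0 w.
  by apply/funext => e; rewrite /frozen; case: ifPn => // /w_frozen.
have gw : two_valued w by case: w_dev => -[].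
have F_fin := frozen_eff_res_fin_num c0ab gw.
case: w_dev => [[_ /= F_lt] | [_ /= F_nlt]].
  rewrite -(fineK F_fin) lte_fin in F_lt.
  by rewrite -[X in _ <= X]sqrrN opprB ler_sqr ?nnegrE //; lra.
have F_ge : m + k <= fine (F (frozen c0 w)).
  by rewrite leNgt -lte_fin fineK //; apply/negP => F_lt; apply: F_nlt.
by rewrite ler_sqr ?nnegrE //; lra.
Qed.

Lemma two_valued_sub_deviating m k : 2 * k <= (b - a) / (size S)%:R ^+ 2 ->
  two_valued `<=` deviating a m k `|` deviating b m k.
Proof.
move=> k_le w gw.
have Fa_fin := frozen_eff_res_fin_num (or_introl erefl) gw.
have Fb_fin := frozen_eff_res_fin_num (or_intror erefl) gw.
have incr : (F (frozen a w) + ((b - a) / (size S)%:R ^+ 2)%:E <= F (frozen b w))%E.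
  apply: eff_res_star_incr; rewrite ?subr_ge0 ?ltW // => e; rewrite /frozen; last first.
    by move=> ->; rewrite addrC subrK.
  case: ifPn => eS; first by rewrite (ltW a_gt0) ltW.
  have := frozen_bounds (or_introl erefl) gw e; rewrite /frozen (negbTE eS) => /andP[ae _].
  by rewrite lexx andbT (le_trans (ltW a_gt0) ae).
have [Fb_lt | Fb_nlt] := pselect (F (frozen b w) < (m + k)%:E)%E; [left; left | right; right].
  split => //=; rewrite -(fineK Fa_fin) lte_fin.
  rewrite -(fineK Fa_fin) -(fineK Fb_fin) -EFinD lee_fin in incr.
  by rewrite -(fineK Fb_fin) lte_fin in Fb_lt; lra.
by split => // -[].
Qed.

Lemma star_neq0 : S != [::].
Proof.
have [th [_ th_unit]] := exists_unit_flow R lf conn finZ Z0 Zs.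
by apply: contraTneq (unit_flow_star_mass lf nl th_unit) => ->; rewrite big_nil -ltNge ltr01.
Qed.

Lemma measurable_frozen_event c0 : measurable (frozen_event c0).
Proof. by apply: (measurable_cylinder r_meas) => e; exact: measurable_set1. Qed.

Lemma measurable_deviating c0 m k : c0 = a \/ c0 = b -> measurable (deviating c0 m k).
Proof.
by move=> c0ab; apply: (sigma_outer_cylinders_measurable r_meas); exact: outer_deviating.
Qed.

Lemma deviating_cover m k : 2 * k <= (b - a) / (size S)%:R ^+ 2 ->
  (1 <= P (deviating a m k) + P (deviating b m k))%E.
Proof.
move=> k_le; have ma := @measurable_deviating a m k (or_introl erefl).
have mb := @measurable_deviating b m k (or_intror erefl).
rewrite -probability_two_valued; apply: le_trans (measureU2 P ma mb).
apply: le_measure; last exact: two_valued_sub_deviating.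
  by apply: mem_set; exact: (sigma_outer_cylinders_measurable r_meas) _ outer_two_valued.
by apply: mem_set; exact: measurableU ma mb.
Qed.

Lemma probability_deviation_event m k : 2 * k <= (b - a) / (size S)%:R ^+ 2 ->
  ((2^-1 ^+ size S)%:E <=
   P (frozen_event a `&` deviating a m k `|` frozen_event b `&` deviating b m k))%E.
Proof.
move=> k_le; have aab : a = a \/ a = b by left.
have bab : b = a \/ b = b by right.
have mA := measurable_frozen_event.
have mC c0 := @measurable_deviating c0 m k.
have indep c0 : c0 = a \/ c0 = b -> P (frozen_event c0 `&` deviating c0 m k) =
    (P (frozen_event c0) * P (deviating c0 m k))%E.
  move=> c0ab; apply: (independent_outer_cylinders r_meas r_indep (fset_uniq _)).
    by move=> e; exact: measurable_set1.
  exact: outer_deviating.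
have [e0 e0S] : exists e0, e0 \in S.
  by case: (S) star_neq0 => // e0 l _; exists e0; rewrite mem_head.
have disj : frozen_event a `&` frozen_event b = set0.
  apply/seteqP; split => // w [wa wb].
  by move: ab; rewrite -(wa e0 e0S) -(wb e0 e0S) ltxx.
have -> : P (frozen_event a `&` deviating a m k `|` frozen_event b `&` deviating b m k) =
    (P (frozen_event a) * P (deviating a m k) + P (frozen_event b) * P (deviating b m k))%E.
  rewrite -(indep a aab) -(indep b bab); apply: measureU.
  - exact: measurableI (mA a) (mC a aab).
  - exact: measurableI (mA b) (mC b bab).
  - by rewrite setIACA disj set0I.
rewrite (probability_frozen_event aab) (probability_frozen_event bab) -muleDr //; last first.
  by rewrite fin_num_adde_defr // probability_fin_num //; exact: mC.
by apply: lee_pemulr; rewrite ?deviating_cover // lee_fin exprn_ge0 // invr_ge0.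
Qed.

Lemma variance_ge_frozen_deviation :
  ((((b - a) / (size S)%:R ^+ 2 / 2) ^+ 2 * 2^-1 ^+ size S)%:E <=
   'V_P[fun w => fine (F (fun e => r e w))])%E.
Proof.
set k := (b - a) / _ / 2.
have k_ge0 : 0 <= k.
  by apply: divr_ge0 => //; apply: divr_ge0; [rewrite subr_ge0 ltW | rewrite exprn_ge0].
have k_le : 2 * k <= (b - a) / (size S)%:R ^+ 2 by rewrite /k mulrC divfK // pnatr_eq0.
rewrite /variance unlock; set m := fine _; rewrite unlock.
pose U := frozen_event a `&` deviating a m k `|` frozen_event b `&` deviating b m k.
apply: (@le_trans _ _ ((k ^+ 2)%:E * P U)%E).
  by rewrite EFinM lee_wpmul2l ?lee_fin ?exprn_ge0 //; exact: probability_deviation_event.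
apply: le_mul_measure_integral => [|||w]; rewrite ?exprn_ge0 //.
- apply: measurableU; apply: measurableI; try exact: measurable_frozen_event.
    by apply: measurable_deviating; left.
  by apply: measurable_deviating; right.
- by move=> w /=; rewrite -expr2 sqr_ge0.
rewrite /= -expr2; case=> -[w_frozen w_dev]; apply: deviating_sqr_ge w_frozen w_dev => //.
  by left.
by right.
Qed.

End VarianceLowerBound.

Unset Implicit Arguments.

Theorem lemma2 (R : realType) (D : nat) :
  exists C : R, 0 < C /\
  forall (V E : countType) (ends : E -> V * V) (s : V) (Z : set V) (a b : R)
         (d : measure_display) (T : measurableType d) (P : probability T R)
         (r : E -> T -> R),
    no_loops ends -> locally_finite ends -> connected_graph ends ->
    has_degree ends s D ->
    finite_set Z -> Z !=set0 -> ~ Z s ->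
    0 < a -> a <= b ->
    (forall e, measurable_fun setT (r e)) ->
    (forall e, has_law_two_point P (r e) a b) ->
    mutually_independent P r ->
    ('V_P[fun w => fine (eff_res ends (fun e => r e w) s Z)]
       >= (C * (b - a) ^+ 2)%:E)%E.
Proof.
(* [maxn D 1] only guards against [D = 0], which the hypotheses exclude. *)
exists (((maxn D 1)%:R ^+ 4 * 4)^-1 * 2^-1 ^+ D); split.
  by rewrite mulr_gt0 ?invr_gt0 ?exprn_gt0 ?mulr_gt0 ?exprn_gt0 ?ltr0n ?leq_max ?orbT.
move=> V E ends s Z a b d T P r nl lf conn deg finZ Z0 Zs a_gt0 ab r_meas r_law r_indep.
have [ab_lt | ba] := ltP a b; last first.
  have -> : b = a by apply/eqP; rewrite eq_le ba ab.
  by rewrite subrr expr0n mulr0 variance_ge0.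
have D_gt0 : (0 < D)%N.
  by rewrite -(size_star deg) lt0n size_eq0 (star_neq0 R nl lf conn finZ Z0 Zs).
apply: le_trans
  (variance_ge_frozen_deviation nl lf conn finZ Z0 Zs a_gt0 ab_lt r_meas r_law r_indep).
rewrite (size_star deg) lee_fin (maxn_idPl D_gt0) le_eqVlt; apply/orP; left; apply/eqP.
by field; rewrite pnatr_eq0 -lt0n.
Qed.
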